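(* Fix $v\in(0,\tfrac12)$ and consider $\alpha\in[0,1]$. For $y\in[0,1]$ let $$x^A(y)=\begin{cases}-\alpha+\sqrt{\alpha^2+y^2-2v}, & y\ge\sqrt{2v},\\ 0,& y<\sqrt{2v},\end{cases}\qquad W(y)=\int_{x^A(y)}^{y}\Big(\alpha x+v-\int_x^y\tilde x\,d\tilde x\Big)\,dx .$$ Then there exists a threshold $\alpha^P$ such that the social planner's problem $\max_{y\in[0,1]}W(y)$ is solved by $y^{P*}=\tfrac12\big(\alpha+\sqrt{\alpha^2+4v}\big)$ when $\alpha<\alpha^P$ (content moderation) and by $y^{P*}=1$ (no content moderation) when $\alpha>\alpha^P$. Moreover, with $\alpha^A,\alpha^S,y^{A*},y^{S*}$ as defined in the context, $$\alpha^P<\alpha^S<\alpha^A,$$ and whenever $\alpha<\alpha^P$, $$y^{S*}<y^{P*}<y^{A*}.$$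
   Context: Model: users are indexed by an extremeness index $x$ uniformly distributed (density 1) on $[0,1]$. A platform chooses a moderation level $y\in[0,1]$ and (with perfect technology) removes all content of users with $x>y$. A participating user $x\le y$ has utility $U(x)=\alpha x+v-\int_{\tilde x\in\hat{\mathcal X},\,x<\tilde x\le y}\tilde x\,d\tilde x$, where $\hat{\mathcal X}$ is the set of participating users; $\alpha\ge 0$ is the posting-utility parameter and $v$ the reading utility. Under this model, for a given $y$ the participating users (with no fee) form the interval $[x^A(y),y]$ with $x^A$ as in the claim, and the social welfare is $W(y)$. Advertising platform: maximizes $\zeta\,(y-x^A(y))$ over $y$ (with $\zeta>0$); define $\alpha^A:=\sqrt{2v}$ and $y^{A*}:=\sqrt{2v}$ (its optimal moderation level when $\alpha<\alpha^A$; for $\alpha\ge\alpha^A$ it chooses $y=1$). Subscription platform: chooses $y\in[0,1]$ and fee $p\ge0$ to maximize $p\,(y-x^S(y,p))$ where $x^S(y,p)=-\alpha+\sqrt{\alpha^2+y^2-2(v-p)}$ if $y^2\ge 2(v-p)$ and $x^S(y,p)=0$ otherwise. Define $\Pi(\alpha)=\max_{p\ge 0}p\big(1+\alpha-\sqrt{\alpha^2+1-2(v-p)}\big)$ and $\alpha^S:=\inf\{\alpha\ge0:\Pi(\alpha)\ge (2v/3)^{3/2}\}$; this is the threshold below which the subscription platform moderates content, choosing $y^{S*}:=\sqrt{2v/3}$ (and above which it chooses $y=1$). *)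

From Stdlib Require Import Reals.
From Coquelicot Require Import Coquelicot.
Open Scope R_scope.

(* Lowest participating user with no fee: x^A(y). *)
Definition xA (alpha v y : R) : R :=
  if Rlt_dec y (sqrt (2 * v)) then 0
  else - alpha + sqrt (alpha ^ 2 + y ^ 2 - 2 * v).

Definition W (alpha v y : R) : R :=
  RInt (fun x => alpha * x + v - RInt (fun t => t) x y) (xA alpha v y) y.

Definition yP (alpha v : R) : R := (alpha + sqrt (alpha ^ 2 + 4 * v)) / 2.

Definition alphaA (v : R) : R := sqrt (2 * v).
Definition yA (v : R) : R := sqrt (2 * v).

(* Subscription platform: Pi(alpha) = max_{p>=0} p (1 + alpha - sqrt(alpha^2 + 1 - 2 (v - p))),
   taken as the supremum (the max is attained). *)
Definition PiS (v alpha : R) : R :=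
  real (Lub_Rbar (fun z => exists p, 0 <= p /\
          z = p * (1 + alpha - sqrt (alpha ^ 2 + 1 - 2 * (v - p))))).

Definition subs_moderated_profit (v : R) : R := (2 * v / 3) * sqrt (2 * v / 3).

Definition alphaS (v : R) : R :=
  real (Glb_Rbar (fun alpha => 0 <= alpha /\ subs_moderated_profit v <= PiS v alpha)).

Definition yS (v : R) : R := sqrt (2 * v / 3).

Definition planner_optimal (alpha v y : R) : Prop :=
  0 <= y <= 1 /\ forall y', 0 <= y' <= 1 -> W alpha v y' <= W alpha v y.

(* In closed form, W y is the cubic [Wfull] for y < sqrt (2 v) (everybody in [0, y]
   participates), maximised there at min (yP, sqrt (2 v)); for y >= sqrt (2 v) the slope of W is
   nondecreasing, so on [sqrt (2 v), 1] W is maximised at an endpoint.  Hence the planner chooses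
   yP or 1 according to the sign of [moderation_gain a], which is nonincreasing in a; alphaP is
   where it changes sign.  Parametrising v = 3/2 t^4, an explicit polynomial [alpha_sep t]
   satisfies [moderation_gain (alpha_sep t) < 0] and Pi(a) < (2v/3)^(3/2) for a < alpha_sep t,
   whence alphaP < alpha_sep t <= alphaS; on the other side Pi(t^2) reaches (2v/3)^(3/2), so
   alphaS <= t^2 < sqrt (2 v) = alphaA.  The polynomial inequalities in t are certified by
   Bernstein coefficients on [0, 19/25]. *)

From Stdlib Require Import Reals Lra Psatz List.
From Coquelicot Require Import Coquelicot.
Import ListNotations.
Open Scope R_scope.

(** * Closed form of the welfare *)

Definition Wfull (a v y : R) : R := a * y ^ 2 / 2 + v * y - y ^ 3 / 3.

Definition Wseg (a v z y : R) : R :=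
  Wfull a v y - (a * z ^ 2 / 2 + (v - y ^ 2 / 2) * z + z ^ 3 / 6).

Lemma RInt_id (x y : R) : RInt (fun t => t) x y = (y ^ 2 - x ^ 2) / 2.
Proof.
  apply is_RInt_unique.
  replace ((y ^ 2 - x ^ 2) / 2) with (minus ((fun t => t ^ 2 / 2) y) ((fun t => t ^ 2 / 2) x))
    by (unfold minus, plus, opp; simpl; field).
  apply (is_RInt_derive (fun t => t ^ 2 / 2)).
  - intros t _. auto_derive; [auto | field].
  - intros t _. apply continuous_id.
Qed.

Lemma W_Wseg (a v y : R) : W a v y = Wseg a v (xA a v y) y.
Proof.
  unfold W.
  rewrite (RInt_ext _ (fun x => a * x + v - (y ^ 2 - x ^ 2) / 2))
    by (intros x _; now rewrite RInt_id).
  apply is_RInt_unique.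
  set (F := fun x => a * x ^ 2 / 2 + (v - y ^ 2 / 2) * x + x ^ 3 / 6).
  replace (Wseg a v (xA a v y) y) with (minus (F y) (F (xA a v y)))
    by (unfold minus, plus, opp, F, Wseg, Wfull; simpl; field).
  apply (is_RInt_derive F).
  - intros x _. unfold F. auto_derive; [auto | field].
  - intros x _. apply (@ex_derive_continuous R_AbsRing R_NormedModule).
    unfold F. auto_derive. auto.
Qed.

Definition xcut (a v y : R) : R := - a + sqrt (a ^ 2 + y ^ 2 - 2 * v).

Definition Wcut (a v y : R) : R := Wseg a v (xcut a v y) y.

Lemma W_lt_sqrt2v (a v y : R) : y < sqrt (2 * v) -> W a v y = Wfull a v y.
Proof.
  intros Hy. rewrite W_Wseg. unfold xA, Wseg.
  destruct (Rlt_dec y (sqrt (2 * v))); [field | lra].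
Qed.

Lemma W_ge_sqrt2v (a v y : R) : sqrt (2 * v) <= y -> W a v y = Wcut a v y.
Proof.
  intros Hy. rewrite W_Wseg. unfold xA, Wcut, xcut.
  destruct (Rlt_dec y (sqrt (2 * v))); [lra | reflexivity].
Qed.

Lemma sqrt2v_sq (v : R) : 0 <= v -> sqrt (2 * v) ^ 2 = 2 * v.
Proof. intros Hv. rewrite pow2_sqrt; lra. Qed.

Lemma sqrt2v_lt_1 (v : R) : 0 <= v -> 2 * v < 1 -> sqrt (2 * v) < 1.
Proof. intros Hv0 Hv. rewrite <- sqrt_1. apply sqrt_lt_1_alt. lra. Qed.

Lemma Wcut_sqrt2v (a v : R) : 0 <= a -> 0 <= v ->
  Wcut a v (sqrt (2 * v)) = Wfull a v (sqrt (2 * v)).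
Proof.
  intros Ha Hv. unfold Wcut, xcut, Wseg. rewrite sqrt2v_sq by lra.
  replace (a ^ 2 + 2 * v - 2 * v) with (a ^ 2) by ring.
  rewrite sqrt_pow2 by lra. field.
Qed.

(* [xcut a v y] is where the marginal participant's utility [a z + v - (y^2 - z^2)/2]
   vanishes. *)
Lemma Wseg_le_Wcut (a v y z : R) : 0 <= a -> 2 * v <= y ^ 2 -> 0 <= z ->
  Wseg a v z y <= Wcut a v y.
Proof.
  intros Ha Hy Hz. unfold Wcut.
  assert (S_sq := sqrt_sqrt (a ^ 2 + y ^ 2 - 2 * v) ltac:(nra)).
  assert (S_ge_a : a <= sqrt (a ^ 2 + y ^ 2 - 2 * v)).
  { rewrite <- (sqrt_pow2 a Ha) at 1. apply sqrt_le_1_alt. nra. }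
  set (X := xcut a v y).
  assert (v_eq : v = (y ^ 2 - X ^ 2 - 2 * a * X) / 2)
    by (unfold X, xcut; nra).
  assert (gap : Wseg a v X y - Wseg a v z y = (z - X) ^ 2 * ((z - X) / 3 + X + a) / 2)
    by (unfold Wseg, Wfull; rewrite v_eq; field).
  assert (0 <= (z - X) ^ 2 * ((z - X) / 3 + X + a))
    by (apply Rmult_le_pos; [apply pow2_ge_0 | unfold X, xcut; lra]).
  lra.
Qed.

Definition Wcut_slope (a v y : R) : R := v - y ^ 2 + y * sqrt (a ^ 2 + y ^ 2 - 2 * v).

Lemma Wcut_derive (a v y : R) : 2 * v < y ^ 2 -> is_derive (Wcut a v) y (Wcut_slope a v y).
Proof.
  intros Hy. unfold Wcut, Wseg, Wfull, xcut, Wcut_slope.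
  assert (pos : 0 < a ^ 2 + y ^ 2 - 2 * v) by nra.
  auto_derive.
  - repeat split; nra.
  - replace (a * (a * 1) + y * (y * 1) + - (2 * v)) with (a ^ 2 + y ^ 2 - 2 * v) by ring.
    assert (S_sq := sqrt_sqrt _ (Rlt_le _ _ pos)).
    assert (S_pos := sqrt_lt_R0 _ pos).
    set (S := sqrt (a ^ 2 + y ^ 2 - 2 * v)) in *.
    field_simplify_eq; [| lra].
    replace (S ^ 2) with (S * S) by ring. rewrite S_sq. ring.
Qed.

Lemma Wcut_continuity_pt (a v y : R) : 2 * v <= y ^ 2 -> continuity_pt (Wcut a v) y.
Proof. intros Hy. unfold Wcut, Wseg, Wfull, xcut. reg. nra. Qed.

(* With [S = sqrt (a^2 + y^2 - 2 v)] and [K = a^2 - 2 v], the slope is [v + K y / (S + y)];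
   the two identities below show that [K y / (S + y)] is nondecreasing whatever the sign of [K]. *)
Lemma Wcut_slope_le (a v y1 y2 : R) : 0 < y1 <= y2 -> 2 * v <= y1 ^ 2 ->
  Wcut_slope a v y1 <= Wcut_slope a v y2.
Proof.
  intros Hy Hy1. unfold Wcut_slope.
  assert (E1 := sqrt_sqrt (a ^ 2 + y1 ^ 2 - 2 * v) ltac:(nra)).
  assert (E2 := sqrt_sqrt (a ^ 2 + y2 ^ 2 - 2 * v) ltac:(nra)).
  assert (N1 := sqrt_pos (a ^ 2 + y1 ^ 2 - 2 * v)).
  assert (N2 := sqrt_pos (a ^ 2 + y2 ^ 2 - 2 * v)).
  set (S1 := sqrt (a ^ 2 + y1 ^ 2 - 2 * v)) in *.
  set (S2 := sqrt (a ^ 2 + y2 ^ 2 - 2 * v)) in *.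
  set (K := a ^ 2 - 2 * v).
  assert (diff_eq : ((y2 * S2 - y2 ^ 2) - (y1 * S1 - y1 ^ 2)) * ((S1 + y1) * (S2 + y2))
                    = K * (y2 * S1 - y1 * S2)).
  { transitivity ((S1 + y1) * (y2 * (S2 * S2) - y2 ^ 3)
                   - (S2 + y2) * (y1 * (S1 * S1) - y1 ^ 3));
      [ring | rewrite E1, E2; unfold K; ring]. }
  assert (cross_eq : K * (y2 * S1 - y1 * S2) * (y2 * S1 + y1 * S2) = K ^ 2 * (y2 ^ 2 - y1 ^ 2)).
  { transitivity (K * (y2 ^ 2 * (S1 * S1) - y1 ^ 2 * (S2 * S2)));
      [ring | rewrite E1, E2; unfold K; ring]. }
  assert (0 <= y2 * S1) by nra.
  assert (0 <= y1 * S2) by nra.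
  assert (cross_nonneg : 0 <= K * (y2 * S1 - y1 * S2)).
  { destruct (Req_dec (y2 * S1 + y1 * S2) 0) as [Z | Z].
    - replace (y2 * S1 - y1 * S2) with 0 by lra. lra.
    - apply (Rmult_le_reg_r (y2 * S1 + y1 * S2)); [lra |].
      rewrite cross_eq, Rmult_0_l. apply Rmult_le_pos; [apply pow2_ge_0 | nra]. }
  assert (0 < (S1 + y1) * (S2 + y2)) by (apply Rmult_lt_0_compat; lra).
  assert (0 <= (y2 * S2 - y2 ^ 2) - (y1 * S1 - y1 ^ 2)).
  { apply (Rmult_le_reg_r ((S1 + y1) * (S2 + y2))); [lra |]. rewrite diff_eq. lra. }
  lra.
Qed.

Lemma le_Rmax_of_slope_nondecreasing (f g : R -> R) (l r y : R) :
  (forall x, l < x < r -> is_derive f x (g x)) ->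
  (forall x, l <= x <= r -> continuity_pt f x) ->
  (forall x1 x2, l <= x1 <= x2 -> x2 <= r -> g x1 <= g x2) ->
  l <= y <= r -> f y <= Rmax (f l) (f r).
Proof.
  intros Hd Hc Hg Hy.
  destruct (Rle_or_lt (g y) 0) as [Hgy | Hgy].
  - destruct (MVT_gen f l y g) as [xi [Hxi Hmvt]];
      rewrite ?Rmin_left, ?Rmax_right in * by lra.
    + intros x Hx. apply Hd. lra.
    + intros x Hx. apply Hc. lra.
    + assert (g xi <= g y) by (apply Hg; lra).
      assert (g xi * (y - l) <= 0) by nra.
      apply Rle_trans with (f l); [lra | apply Rmax_l].
  - destruct (MVT_gen f y r g) as [xi [Hxi Hmvt]];
      rewrite ?Rmin_left, ?Rmax_right in * by lra.
    + intros x Hx. apply Hd. lra.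
    + intros x Hx. apply Hc. lra.
    + assert (g y <= g xi) by (apply Hg; lra).
      assert (0 <= g xi * (r - y)) by nra.
      apply Rle_trans with (f r); [lra | apply Rmax_r].
Qed.

Lemma Wcut_le_Rmax (a v l r y : R) : 0 < l -> 2 * v <= l ^ 2 -> l <= y <= r ->
  Wcut a v y <= Rmax (Wcut a v l) (Wcut a v r).
Proof.
  intros Hl Hl2 Hy.
  apply (le_Rmax_of_slope_nondecreasing _ (Wcut_slope a v)); [| | | exact Hy].
  - intros x Hx. apply Wcut_derive. nra.
  - intros x Hx. apply Wcut_continuity_pt. nra.
  - intros x1 x2 Hx Hx2. apply Wcut_slope_le; nra.
Qed.

(** * The planner's problem *)

Lemma yP_spec (a v : R) : 0 <= a -> 0 < v ->
  0 < yP a v /\ a <= yP a v /\ yP a v ^ 2 = a * yP a v + v.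
Proof.
  intros Ha Hv. unfold yP.
  assert (E := sqrt_sqrt (a ^ 2 + 4 * v) ltac:(nra)).
  assert (a < sqrt (a ^ 2 + 4 * v)).
  { rewrite <- (sqrt_pow2 a Ha) at 1. apply sqrt_lt_1_alt. nra. }
  repeat split; nra.
Qed.

Lemma yP_lt_sqrt2v (a v : R) : 0 <= a -> 0 < v -> a * sqrt (2 * v) < v -> yP a v < sqrt (2 * v).
Proof.
  intros Ha Hv Hac. destruct (yP_spec a v Ha Hv) as [P_pos [P_ge P_eq]].
  assert (c_sq := sqrt2v_sq v ltac:(lra)).
  assert (c_pos : 0 < sqrt (2 * v)) by (apply sqrt_lt_R0; lra).
  destruct (Rlt_or_le (yP a v) (sqrt (2 * v))) as [H | H]; [exact H |].
  assert (yP a v * (yP a v - a) >= sqrt (2 * v) * (sqrt (2 * v) - a)) by nra.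
  nra.
Qed.

Lemma yS_lt_yP (a v : R) : 0 <= a -> 0 < v -> yS v < yP a v.
Proof.
  intros Ha Hv. destruct (yP_spec a v Ha Hv) as [P_pos [P_ge P_eq]].
  unfold yS. assert (c_nonneg : 0 <= sqrt (2 * v / 3)) by apply sqrt_pos.
  assert (E := sqrt_sqrt (2 * v / 3) ltac:(lra)).
  destruct (Rlt_or_le (sqrt (2 * v / 3)) (yP a v)) as [H | H]; [exact H |].
  nra.
Qed.

Lemma Wfull_le_yP (a v y : R) : 0 <= a -> 0 < v -> 0 <= y -> Wfull a v y <= Wfull a v (yP a v).
Proof.
  intros Ha Hv Hy. destruct (yP_spec a v Ha Hv) as [P_pos [P_ge P_eq]].
  set (p := yP a v) in *.
  assert (gap : Wfull a v p - Wfull a v y = (p - y) ^ 2 * (2 * p + y - 3 * a / 2) / 3).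
  { unfold Wfull. replace v with (p ^ 2 - a * p) by lra. field. }
  assert (0 <= (p - y) ^ 2 * (2 * p + y - 3 * a / 2))
    by (apply Rmult_le_pos; [apply pow2_ge_0 | lra]).
  lra.
Qed.

Lemma Wfull_le_below_yP (a v y c : R) : 0 <= a -> 0 < v -> 0 <= y <= c -> c <= yP a v ->
  Wfull a v y <= Wfull a v c.
Proof.
  intros Ha Hv Hy Hc. destruct (yP_spec a v Ha Hv) as [P_pos [P_ge P_eq]].
  set (p := yP a v) in *.
  assert (slope_c : 0 <= a * c + v - c ^ 2) by nra.
  assert (slope_y : 0 <= a * y + v - y ^ 2) by nra.
  assert (gap : Wfull a v c - Wfull a v y
                = (c - y) * ((a * c + v - c ^ 2 + (a * y + v - y ^ 2)) / 2 + (c - y) ^ 2 / 6))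
    by (unfold Wfull; field).
  assert (0 <= (c - y) * ((a * c + v - c ^ 2 + (a * y + v - y ^ 2)) / 2 + (c - y) ^ 2 / 6)).
  { apply Rmult_le_pos; [lra |]. assert (0 <= (c - y) ^ 2) by apply pow2_ge_0. lra. }
  lra.
Qed.

Definition ymax (a v : R) : R := Rmin (yP a v) (sqrt (2 * v)).

Definition Wmax (a v : R) : R := Wfull a v (ymax a v).

Definition moderation_gain (a v : R) : R := Wmax a v - W a v 1.

Lemma ymax_bounds (a v : R) : 0 <= a -> 0 < v -> 0 <= ymax a v <= sqrt (2 * v).
Proof.
  intros Ha Hv. destruct (yP_spec a v Ha Hv) as [P_pos _].
  assert (0 <= sqrt (2 * v)) by apply sqrt_pos.
  split; [apply Rmin_glb; lra | apply Rmin_r].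
Qed.

Lemma Wfull_le_Wmax (a v y : R) : 0 <= a -> 0 < v -> 0 <= y <= sqrt (2 * v) ->
  Wfull a v y <= Wmax a v.
Proof.
  intros Ha Hv Hy. unfold Wmax, ymax.
  destruct (Rle_or_lt (yP a v) (sqrt (2 * v))) as [H | H].
  - rewrite Rmin_left by lra. apply Wfull_le_yP; lra.
  - rewrite Rmin_right by lra. apply Wfull_le_below_yP; lra.
Qed.

Lemma W_ymax (a v : R) : 0 <= a -> 0 < v -> W a v (ymax a v) = Wmax a v.
Proof.
  intros Ha Hv. destruct (ymax_bounds a v Ha Hv) as [_ Hle].
  destruct (Rlt_or_le (ymax a v) (sqrt (2 * v))) as [H | H].
  - now rewrite W_lt_sqrt2v.
  - assert (E : ymax a v = sqrt (2 * v)) by lra.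
    unfold Wmax. rewrite E, W_ge_sqrt2v, Wcut_sqrt2v by lra. reflexivity.
Qed.

Lemma W_le_Rmax (a v y : R) : 0 <= a -> 0 < v -> 2 * v < 1 -> 0 <= y <= 1 ->
  W a v y <= Rmax (Wmax a v) (W a v 1).
Proof.
  intros Ha Hv Hv1 Hy.
  assert (c_lt_1 := sqrt2v_lt_1 v ltac:(lra) Hv1).
  assert (c_pos : 0 < sqrt (2 * v)) by (apply sqrt_lt_R0; lra).
  assert (Wcut_c : Wcut a v (sqrt (2 * v)) <= Wmax a v).
  { rewrite Wcut_sqrt2v by lra. apply Wfull_le_Wmax; lra. }
  destruct (Rlt_or_le y (sqrt (2 * v))) as [H | H].
  - rewrite W_lt_sqrt2v by lra.
    apply Rle_trans with (Wmax a v); [apply Wfull_le_Wmax; lra | apply Rmax_l].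
  - rewrite (W_ge_sqrt2v a v 1), W_ge_sqrt2v by lra.
    eapply Rle_trans; [apply (Wcut_le_Rmax a v (sqrt (2 * v)) 1); [lra | | lra] |].
    + rewrite sqrt2v_sq; lra.
    + apply Rle_max_compat_r. lra.
Qed.

Lemma planner_optimal_yP (a v : R) : 0 <= a -> 0 < v -> 2 * v < 1 ->
  yP a v < sqrt (2 * v) -> 0 <= moderation_gain a v -> planner_optimal a v (yP a v).
Proof.
  intros Ha Hv Hv1 HyP Hgain. unfold moderation_gain in Hgain.
  destruct (yP_spec a v Ha Hv) as [P_pos _].
  assert (c_lt_1 := sqrt2v_lt_1 v ltac:(lra) Hv1).
  assert (E : ymax a v = yP a v) by (apply Rmin_left; lra).
  split; [lra |].
  intros y Hy. rewrite <- E, W_ymax by lra.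
  apply Rle_trans with (1 := W_le_Rmax a v y Ha Hv Hv1 Hy).
  apply Rmax_lub; lra.
Qed.

Lemma planner_optimal_one (a v : R) : 0 <= a -> 0 < v -> 2 * v < 1 ->
  moderation_gain a v <= 0 -> planner_optimal a v 1.
Proof.
  intros Ha Hv Hv1 Hgain. unfold moderation_gain in Hgain.
  split; [lra |].
  intros y Hy. apply Rle_trans with (1 := W_le_Rmax a v y Ha Hv Hv1 Hy).
  apply Rmax_lub; lra.
Qed.

Lemma xcut1_spec (a v : R) : 0 <= a -> 2 * v <= 1 ->
  0 <= xcut a v 1 /\ xcut a v 1 ^ 2 + 2 * a * xcut a v 1 = 1 - 2 * v.
Proof.
  intros Ha Hv. unfold xcut.
  assert (E := sqrt_sqrt (a ^ 2 + 1 ^ 2 - 2 * v) ltac:(nra)).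
  assert (a <= sqrt (a ^ 2 + 1 ^ 2 - 2 * v)).
  { rewrite <- (sqrt_pow2 a Ha) at 1. apply sqrt_le_1_alt. nra. }
  split; nra.
Qed.

Lemma Wseg_le_W1 (a v z : R) : 0 <= a -> 0 < v -> 2 * v < 1 -> 0 <= z -> Wseg a v z 1 <= W a v 1.
Proof.
  intros Ha Hv Hv1 Hz.
  rewrite W_ge_sqrt2v by (pose proof (sqrt2v_lt_1 v ltac:(lra) Hv1); lra).
  apply Wseg_le_Wcut; lra.
Qed.

Lemma Wseg_1_shift (a1 a2 v z : R) : Wseg a2 v z 1 = Wseg a1 v z 1 + (a2 - a1) * (1 - z ^ 2) / 2.
Proof. unfold Wseg, Wfull. field. Qed.

Lemma Wfull_shift (a1 a2 v y : R) : Wfull a2 v y = Wfull a1 v y + (a2 - a1) * y ^ 2 / 2.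
Proof. unfold Wfull. field. Qed.

(* Raising [a] by [d] raises [Wmax] by at most [d v] (as [ymax^2 <= 2 v]) and [W(1)] by at
   least [d v] (as [1 - xcut^2 >= 2 v]). *)
Lemma moderation_gain_nonincreasing (a1 a2 v : R) : 0 <= a1 <= a2 -> 0 < v -> 2 * v < 1 ->
  moderation_gain a2 v <= moderation_gain a1 v.
Proof.
  intros Ha Hv Hv1. unfold moderation_gain.
  destruct (ymax_bounds a2 v ltac:(lra) Hv) as [Y0 Y1].
  assert (Ysq : ymax a2 v ^ 2 <= 2 * v)
    by (rewrite <- (sqrt2v_sq v) by lra; apply pow_incr; lra).
  assert (Wmax_le : Wmax a2 v <= Wmax a1 v + (a2 - a1) * v).
  { unfold Wmax at 1. rewrite (Wfull_shift a1).
    assert (Wfull a1 v (ymax a2 v) <= Wmax a1 v) by (apply Wfull_le_Wmax; lra).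
    nra. }
  destruct (xcut1_spec a1 v ltac:(lra) ltac:(lra)) as [X0 Xeq].
  assert (W1_ge : W a1 v 1 + (a2 - a1) * v <= W a2 v 1).
  { apply Rle_trans with (Wseg a2 v (xcut a1 v 1) 1); [| apply Wseg_le_W1; lra].
    rewrite (Wseg_1_shift a1), W_ge_sqrt2v by (pose proof (sqrt2v_lt_1 v ltac:(lra) Hv1); lra).
    assert (0 <= (a2 - a1) * (2 * a1 * xcut a1 v 1)) by (apply Rmult_le_pos; nra).
    unfold Wcut. nra. }
  lra.
Qed.

Lemma moderation_gain_lipschitz (a1 a2 v : R) : 0 <= a1 <= a2 -> 0 < v -> 2 * v < 1 ->
  moderation_gain a1 v <= moderation_gain a2 v + (a2 - a1) / 2.
Proof.
  intros Ha Hv Hv1. unfold moderation_gain.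
  destruct (ymax_bounds a1 v ltac:(lra) Hv) as [Y0 Y1].
  assert (Wmax_le : Wmax a1 v <= Wmax a2 v).
  { apply Rle_trans with (Wfull a2 v (ymax a1 v)); [| apply Wfull_le_Wmax; lra].
    unfold Wmax. rewrite (Wfull_shift a1 a2).
    assert (0 <= (a2 - a1) * ymax a1 v ^ 2) by (apply Rmult_le_pos; nra).
    lra. }
  destruct (xcut1_spec a2 v ltac:(lra) ltac:(lra)) as [X0 Xeq].
  assert (W1_ge : W a2 v 1 - (a2 - a1) / 2 <= W a1 v 1).
  { apply Rle_trans with (Wseg a1 v (xcut a2 v 1) 1); [| apply Wseg_le_W1; lra].
    rewrite (Wseg_1_shift a2), W_ge_sqrt2v by (pose proof (sqrt2v_lt_1 v ltac:(lra) Hv1); lra).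
    assert (0 <= (a2 - a1) * xcut a2 v 1 ^ 2) by (apply Rmult_le_pos; nra).
    unfold Wcut. nra. }
  lra.
Qed.

(* The one-sided Lipschitz bound is what keeps the threshold strictly below [b]. *)
Lemma threshold_of_nonincreasing (f : R -> R) (b L : R) : 0 < b -> 0 < L ->
  (forall a1 a2, 0 <= a1 <= a2 -> f a2 <= f a1) ->
  (forall a1 a2, 0 <= a1 <= a2 -> f a1 <= f a2 + L * (a2 - a1)) ->
  f b < 0 ->
  exists T, T < b /\ (forall a, 0 <= a < T -> 0 <= f a) /\ (forall a, 0 <= a -> T < a -> f a < 0).
Proof.
  intros Hb HL Hmono Hlip Hfb.
  set (E := fun a => a = 0 \/ (0 <= a /\ 0 <= f a)).
  set (B := Rmax 0 (b + f b / L)).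
  assert (E_le_B : forall z, E z -> z <= B).
  { intros z [-> | [Hz Hfz]]; [apply Rmax_l |].
    apply Rle_trans with (b + f b / L); [| apply Rmax_r].
    destruct (Rle_or_lt b z) as [Hbz | Hzb].
    - pose proof (Hmono b z ltac:(lra)). lra.
    - pose proof (Hlip z b ltac:(lra)).
      apply (Rmult_le_reg_l L); [lra |].
      replace (L * (b + f b / L)) with (L * b + f b) by (field; lra). nra. }
  destruct (completeness E) as [T [T_ub T_least]].
  { exists B. exact E_le_B. }
  { exists 0. now left. }
  exists T. split; [| split].
  - apply Rle_lt_trans with B; [now apply T_least |].
    apply Rmax_lub_lt; [lra |].
    assert (f b / L < 0) by (apply Rdiv_neg_pos; lra). lra.
  - intros a Ha. destruct (Rle_or_lt 0 (f a)) as [Hfa | Hfa]; [exact Hfa |].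
    assert (T <= a); [| lra].
    apply T_least. intros z [-> | [Hz Hfz]]; [lra |].
    destruct (Rle_or_lt z a) as [Hza | Hza]; [exact Hza |].
    pose proof (Hmono a z ltac:(lra)). lra.
  - intros a Ha HTa. destruct (Rlt_or_le (f a) 0) as [Hfa | Hfa]; [exact Hfa |].
    assert (a <= T) by (apply T_ub; right; lra). lra.
Qed.

(** * The subscription platform *)

Lemma real_Lub_Rbar_between (E : R -> Prop) (z B : R) : E z -> (forall x, E x -> x <= B) ->
  z <= real (Lub_Rbar E) <= B.
Proof.
  intros Hz HB. destruct (Lub_Rbar_correct E) as [Hub Hleast].
  assert (Rbar_le (Lub_Rbar E) B) by (apply Hleast; intros x Hx; apply HB, Hx).
  assert (Rbar_le z (Lub_Rbar E)) by (apply Hub, Hz).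
  destruct (Lub_Rbar E); simpl in *; tauto || lra.
Qed.

Lemma real_Glb_Rbar_between (E : R -> Prop) (z L : R) : E z -> (forall x, E x -> L <= x) ->
  L <= real (Glb_Rbar E) <= z.
Proof.
  intros Hz HL. destruct (Glb_Rbar_correct E) as [Hlb Hgreatest].
  assert (Rbar_le L (Glb_Rbar E)) by (apply Hgreatest; intros x Hx; apply HL, Hx).
  assert (Rbar_le (Glb_Rbar E) z) by (apply Hlb, Hz).
  destruct (Glb_Rbar E); simpl in *; tauto || lra.
Qed.

Definition profitS (a v p : R) : R := p * (1 + a - sqrt (a ^ 2 + 1 - 2 * (v - p))).

(* In terms of [s = sqrt (a^2 + 1 - 2 (v - p))], the profit is [s^2 (2 - s) / 2] at most. *)
Lemma profitS_le_1 (a v p : R) : 0 <= a <= 1 -> 2 * v < 1 -> 0 <= p -> profitS a v p <= 1.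
Proof.
  intros Ha Hv Hp. unfold profitS.
  assert (E := sqrt_sqrt (a ^ 2 + 1 - 2 * (v - p)) ltac:(nra)).
  assert (N := sqrt_pos (a ^ 2 + 1 - 2 * (v - p))).
  set (s := sqrt (a ^ 2 + 1 - 2 * (v - p))) in *.
  destruct (Rle_or_lt (1 + a) s) as [H | H]; [nra |].
  assert (p * (1 + a - s) <= s * s / 2 * (2 - s)) by nra.
  assert (0 <= (s - 4 / 3) ^ 2 * (s + 2 / 3)) by (apply Rmult_le_pos; [apply pow2_ge_0 | lra]).
  nra.
Qed.

Lemma PiS_le (v a B : R) : (forall p, 0 <= p -> profitS a v p <= B) -> PiS v a <= B.
Proof.
  intros HB. apply (real_Lub_Rbar_between _ 0).
  - exists 0. split; [lra | unfold profitS; ring].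
  - intros z [p [Hp ->]]. now apply HB.
Qed.

Lemma profitS_le_PiS (v a p : R) : 0 <= a <= 1 -> 2 * v < 1 -> 0 <= p -> profitS a v p <= PiS v a.
Proof.
  intros Ha Hv Hp. apply (real_Lub_Rbar_between _ _ 1).
  - now exists p.
  - intros z [q [Hq ->]]. now apply profitS_le_1.
Qed.

Lemma alphaS_between (v L a0 : R) : 0 <= a0 -> subs_moderated_profit v <= PiS v a0 ->
  (forall a, 0 <= a -> subs_moderated_profit v <= PiS v a -> L <= a) -> L <= alphaS v <= a0.
Proof.
  intros Ha0 Hprofit HL. apply real_Glb_Rbar_between; [now split |].
  intros a [Ha Hpa]. now apply HL.
Qed.

Lemma profitS_le_of_le (a1 a2 v p : R) : 0 <= a1 <= a2 -> 2 * v < 1 -> 0 <= p ->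
  profitS a1 v p <= profitS a2 v p.
Proof.
  intros Ha Hv Hp. unfold profitS.
  set (C := 1 - 2 * (v - p)).
  replace (a1 ^ 2 + 1 - 2 * (v - p)) with (a1 ^ 2 + C) by (unfold C; ring).
  replace (a2 ^ 2 + 1 - 2 * (v - p)) with (a2 ^ 2 + C) by (unfold C; ring).
  assert (C_pos : 0 < C) by (unfold C; lra).
  assert (E1 := sqrt_sqrt (a1 ^ 2 + C) ltac:(nra)). assert (N1 := sqrt_pos (a1 ^ 2 + C)).
  assert (E2 := sqrt_sqrt (a2 ^ 2 + C) ltac:(nra)). assert (N2 := sqrt_pos (a2 ^ 2 + C)).
  set (s1 := sqrt (a1 ^ 2 + C)) in *. set (s2 := sqrt (a2 ^ 2 + C)) in *.
  assert (s1_ge : a1 <= s1) by nra.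
  assert (s2_le : s2 <= s1 + (a2 - a1)).
  { destruct (Rle_or_lt s2 (s1 + (a2 - a1))) as [H | H]; [exact H |]. nra. }
  nra.
Qed.

(** * A polynomial separator of the two thresholds *)

(* Tangent-parabola bounds for two cubics with negative leading coefficient: on [0, oo) each
   lies below the concave parabola with its value, slope and a curvature [-2 k] at [z]. *)
Lemma Wfull_tangent_bound (a v y z : R) : 0 <= y -> 0 < 2 / 3 * z - a / 2 ->
  4 * (2 / 3 * z - a / 2) * (Wfull a v y - Wfull a v z) <= (a * z + v - z ^ 2) ^ 2.
Proof.
  intros Hy Hk. set (k := 2 / 3 * z - a / 2) in *. set (D := a * z + v - z ^ 2).
  assert (E : 4 * k * (Wfull a v y - Wfull a v z)
              = D ^ 2 - (D - 2 * k * (y - z)) ^ 2 - 4 / 3 * k * ((y - z) ^ 2 * y))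
    by (unfold k, D, Wfull; field).
  rewrite E.
  assert (0 <= k * ((y - z) ^ 2 * y))
    by (apply Rmult_le_pos; [lra | apply Rmult_le_pos; [apply pow2_ge_0 | lra]]).
  pose proof (pow2_ge_0 (D - 2 * k * (y - z))). lra.
Qed.

Lemma profit_cubic_tangent_bound (b K s s0 : R) : 0 <= s -> 0 < 2 * s0 - 1 - b ->
  4 * (2 * s0 - 1 - b) * ((s ^ 2 - K) * (1 + b - s) - (s0 ^ 2 - K) * (1 + b - s0))
  <= (-3 * s0 ^ 2 + 2 * (1 + b) * s0 + K) ^ 2.
Proof.
  intros Hs Hk. set (k := 2 * s0 - 1 - b) in *. set (D := -3 * s0 ^ 2 + 2 * (1 + b) * s0 + K).
  assert (E : 4 * k * ((s ^ 2 - K) * (1 + b - s) - (s0 ^ 2 - K) * (1 + b - s0))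
              = D ^ 2 - (D - 2 * k * (s - s0)) ^ 2 - 4 * k * ((s - s0) ^ 2 * s))
    by (unfold k, D; ring).
  rewrite E.
  assert (0 <= k * ((s - s0) ^ 2 * s))
    by (apply Rmult_le_pos; [lra | apply Rmult_le_pos; [apply pow2_ge_0 | lra]]).
  pose proof (pow2_ge_0 (D - 2 * k * (s - s0))). lra.
Qed.

(* [bernstein [c_0; ...; c_n] n p q = sum_i c_i p^i q^(n-i)]. With [p = 25 t] and
   [q = 19 - 25 t], positive coefficients certify positivity of a polynomial on [0, 19/25). *)
Fixpoint bernstein (cs : list R) (n : nat) (p q : R) : R :=
  match cs with
  | [] => 0
  | c :: cs' => c * q ^ n + p * bernstein cs' (Nat.pred n) p q
  end.

Lemma bernstein_nonneg (cs : list R) (n : nat) (p q : R) :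
  List.Forall (Rlt 0) cs -> 0 <= p -> 0 <= q -> 0 <= bernstein cs n p q.
Proof.
  revert n. induction cs as [| c cs IH]; intros n Hcs Hp Hq; simpl; [lra |].
  inversion_clear Hcs as [| ? ? Hc Hcs'].
  assert (0 <= q ^ n) by (apply pow_le; lra).
  specialize (IH (Nat.pred n) Hcs' Hp Hq). nra.
Qed.

Lemma bernstein_pos (cs : list R) (n : nat) (p q : R) :
  List.Forall (Rlt 0) cs -> cs <> [] -> 0 <= p -> 0 < q -> 0 < bernstein cs n p q.
Proof.
  destruct cs as [| c cs]; [congruence |]. intros Hcs _ Hp Hq.
  inversion_clear Hcs as [| ? ? Hc Hcs']. simpl.
  assert (0 < q ^ n) by (apply pow_lt; lra).
  pose proof (bernstein_nonneg cs (Nat.pred n) p q Hcs' Hp ltac:(lra)). nra.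
Qed.

Lemma pos_of_bernstein_certificate (e N m : R) (cs : list R) (n : nat) (t : R) :
  0 < N -> 0 < m -> List.Forall (Rlt 0) cs -> cs <> [] -> 0 <= t < 19 / 25 ->
  N * e = m * bernstein cs n (25 * t) (19 - 25 * t) -> 0 < e.
Proof.
  intros HN Hm Hcs Hne Ht He.
  assert (0 < N * e)
    by (rewrite He; apply Rmult_lt_0_compat; [| apply bernstein_pos]; lra || assumption).
  nra.
Qed.

(* With [v = 3/2 t^4]: a value of [a] separating alphaP from alphaS, an approximate maximiser
   of [Wfull] there, an approximate optimal cutoff for [y = 1] there, and an approximate
   optimal [s = sqrt (a^2 + 1 - 2 (v - p))] of the subscription platform there. *)
Definition alpha_sep (t : R) : R := 3/2 * t^4 + (1 - 3 * t^4) * t^3 * (9/5 - 3 * t + 3/2 * t^2).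
Definition y_sep (t : R) : R := 3 * t^4 + (1 - 3 * t^4) * t^2 * (7/5 - 7/10 * t).
Definition x_sep (t : R) : R := (1 - 3 * t^4) * (1 + t^3 * (-17/10 + 11/5 * t)).
Definition s_sep (t : R) : R := 1/2 + t^2 + (1 - 3 * t^4) * (1/2 - t^2 + t^3 * (9/10)).

Section Separator.

Variables t v : R.
Hypothesis t_pos : 0 < t.
Hypothesis v_def : v = 3 / 2 * t ^ 4.
Hypothesis v_lt_half : 2 * v < 1.

Lemma v_pos : 0 < v.
Proof. rewrite v_def. assert (0 < t ^ 4) by (apply pow_lt; lra). lra. Qed.

Lemma one_minus_3t4_pos : 0 < 1 - 3 * t ^ 4.
Proof. lra. Qed.

Lemma t_range : 0 <= t < 19 / 25.
Proof.
  split; [lra |]. destruct (Rlt_or_le t (19 / 25)) as [H | H]; [exact H |].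
  assert ((19 / 25) ^ 4 <= t ^ 4) by (apply pow_incr; lra). lra.
Qed.

Lemma pos_of_sep_certificate (e N : R) (i j : nat) (cs : list R) (n : nat) :
  0 < N -> List.Forall (Rlt 0) cs -> cs <> [] ->
  N * e = t ^ i * (1 - 3 * t ^ 4) ^ j * bernstein cs n (25 * t) (19 - 25 * t) -> 0 < e.
Proof.
  intros HN Hcs Hne He.
  apply (pos_of_bernstein_certificate e N (t ^ i * (1 - 3 * t ^ 4) ^ j) cs n t);
    [exact HN | | exact Hcs | exact Hne | exact t_range | exact He].
  apply Rmult_lt_0_compat; apply pow_lt; [lra | exact one_minus_3t4_pos].
Qed.

Lemma alpha_sep_pos : 0 < alpha_sep t.
Proof.
  apply (pos_of_sep_certificate _ (10 * 2297162158203125) 3 0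
      [878906250; 4716796875; 10823437500; 13703906250; 9275802000; 3537332925; 556477371]
      6);
    [lra | repeat constructor; lra | discriminate |].
  unfold alpha_sep. simpl. field.
Qed.

Lemma alpha_sep_sq_lt : alpha_sep t ^ 2 < v / 2.
Proof.
  apply Rlt_0_minus.
  apply (pos_of_sep_certificate _ (100 * 23388161688999176025390625) 4 1
      [286102294921875; 2861022949218750; 12160711669921875; 29525405273437500;
      45735116308593750; 47421179121093750; 34175041962609375; 16997629141462500;
      5617713923956125; 1095926587615200; 92015701785327]
      10);
    [lra | repeat constructor; lra | discriminate |].
  rewrite v_def. unfold alpha_sep. simpl. field.
Qed.

Lemma y_sep_slack : 0 < 2 / 3 * y_sep t - alpha_sep t / 2.
Proof.
  apply (pos_of_sep_certificate _ (60 * 1091152025146484375) 2 0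
      [68359375000; 402441406250; 1095439453125; 1809040625000; 1869599443750; 1184014938000;
      390817652275; 52853491853]
      7);
    [lra | repeat constructor; lra | discriminate |].
  unfold y_sep, alpha_sep. simpl. field.
Qed.

Lemma s_sep_slack : 0 < 2 * s_sep t - 1 - alpha_sep t.
Proof.
  apply (pos_of_sep_certificate _ (2 * 1230955878368377685546875) 0 0
      [7629394531250; 68664550781250; 274658203125000; 640869140625000; 957485712890625;
      939312042187500; 599903548781250; 245531459625000; 56788551178425; 4992406567811]
      9);
    [lra | repeat constructor; lra | discriminate |].
  unfold s_sep, alpha_sep. simpl. field.
Qed.

Lemma x_sep_pos : 0 < x_sep t.
Proof.
  apply (pos_of_sep_certificate _ (10 * 50906640625) 0 1
      [3906250; 15625000; 23437500; 12709925; 3858237]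
      4);
    [lra | repeat constructor; lra | discriminate |].
  unfold x_sep. simpl. field.
Qed.

Lemma welfare_sep_gap :
  (alpha_sep t * y_sep t + v - y_sep t ^ 2) ^ 2
  < 4 * (2 / 3 * y_sep t - alpha_sep t / 2)
      * (Wseg (alpha_sep t) v (x_sep t) 1 - Wfull (alpha_sep t) v (y_sep t)).
Proof.
  apply Rlt_0_minus.
  apply (pos_of_sep_certificate _ (90000 * 60610094979586569553264998830854892730712890625) 8 2
      [72948168963193893432617187500; 1085477601736783981323242187500;
      7669195463880896568298339843750; 34414071868732571601867675781250;
      110429697481004893779754638671875; 269862990201342999935150146484375;
      520646584044252967834472656250000; 808702609399510136032104492187500;
      1020071673230067690765380859375000; 1046481438021478028381958007812500;
      870762187399422675889025878906250; 584303157430859588275294433593750;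
      313418819863738263963914082031250; 132572514262898293393946979296875;
      43379647849362328472248443968750; 10681473650239370616323217541250;
      1902198104702897518768583583000; 226852050769890063920753918310;
      14372759941567407410330473011]
      18);
    [lra | repeat constructor; lra | discriminate |].
  rewrite v_def. unfold Wseg, Wfull, alpha_sep, y_sep, x_sep. simpl. field.
Qed.

Lemma profit_sep_gap :
  (-3 * s_sep t ^ 2 + 2 * (1 + alpha_sep t) * s_sep t + (alpha_sep t ^ 2 + 1 - 2 * v)) ^ 2
  < 4 * (2 * s_sep t - 1 - alpha_sep t)
      * (2 * t ^ 6 - (s_sep t ^ 2 - (alpha_sep t ^ 2 + 1 - 2 * v)) * (1 + alpha_sep t - s_sep t)).
Proof.
  apply Rlt_0_minus.
  apply (pos_of_sep_certificate _ (2000 *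
      6282808648723181836699263397354830118501922697760164737701416015625) 6 1
      [10800249583553522825241088867187500000; 280806489172391593456268310546875000000;
      3465756890363991260528564453125000000000; 27044153526730951853096485137939453125000;
      149911017781778355129063129425048828125000; 628763342450736672617495059967041015625000;
      2075380103730984192225150763988494873046875; 5536199730937952431850135326385498046875000;
      12164407355023806571168825030326843261718750;
      22329397229582468047965317964553833007812500;
      34613119834938336671318486332893371582031250;
      45681430401385082592691355943679809570312500;
      51640148130620438325151402711868286132812500;
      50198718260191401205805260124206542968750000;
      42034980495704867651434678354263305664062500;
      30300681720518030227751129357421875000000000;
      18740303728611555254459261726842041015625000; 9882900542249133655154673423116796875000000;
      4402495216489328610139818032044433593750000; 1635290494243838060313021558158427500000000;
      497869929474114720562344565651206081250000; 121474747063807118473995860664943910000000;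
      23055083618518017229036855629658946350000; 3268121695328385084234941112368922320000;
      325931886900100600012475721258623384800; 20600877175241351755744071465653072000;
      633797906302408782787330283993810272]
      26);
    [lra | repeat constructor; lra | discriminate |].
  rewrite v_def. unfold alpha_sep, s_sep. simpl. field.
Qed.

Lemma moderation_gain_sep_neg : moderation_gain (alpha_sep t) v < 0.
Proof.
  unfold moderation_gain, Wmax.
  assert (b_pos := alpha_sep_pos). assert (Hv := v_pos).
  assert (k_pos := y_sep_slack).
  destruct (ymax_bounds (alpha_sep t) v ltac:(lra) Hv) as [Y0 _].
  pose proof (Wfull_tangent_bound (alpha_sep t) v _ _ Y0 k_pos) as Wmax_le.
  pose proof (Wseg_le_W1 (alpha_sep t) v (x_sep t) ltac:(lra) Hv v_lt_half
                ltac:(pose proof x_sep_pos; lra)) as W1_ge.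
  pose proof welfare_sep_gap as gap.
  set (k := 2 / 3 * y_sep t - alpha_sep t / 2) in *.
  assert (k * (Wfull (alpha_sep t) v (ymax (alpha_sep t) v) - Wseg (alpha_sep t) v (x_sep t) 1) < 0)
    by lra.
  nra.
Qed.

Lemma yP_lt_sqrt2v_below_sep (a : R) : 0 <= a < alpha_sep t -> yP a v < sqrt (2 * v).
Proof.
  intros Ha. assert (Hv := v_pos). apply yP_lt_sqrt2v; [lra | lra |].
  assert (c_sq := sqrt2v_sq v ltac:(lra)).
  assert (c_pos : 0 < sqrt (2 * v)) by (apply sqrt_lt_R0; lra).
  assert (b_sq := alpha_sep_sq_lt).
  assert (bc_sq : (alpha_sep t * sqrt (2 * v)) ^ 2 < v ^ 2)
    by (rewrite Rpow_mult_distr, c_sq; nra).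
  assert (alpha_sep t * sqrt (2 * v) < v) by nra.
  nra.
Qed.

Lemma subs_moderated_profit_eq : subs_moderated_profit v = t ^ 6.
Proof.
  unfold subs_moderated_profit.
  replace (2 * v / 3) with ((t ^ 2) ^ 2) by (rewrite v_def; field).
  rewrite sqrt_pow2 by (apply pow_le; lra). ring.
Qed.

(* Raise [a] to [b = alpha_sep t]; with [s = sqrt (b^2 + 1 - 2 (v - p))] the profit is then
   the cubic [(s^2 - K) (1 + b - s) / 2] in [s], bounded by its tangent parabola at [s_sep t]. *)
Lemma PiS_lt_below_sep (a : R) : 0 <= a < alpha_sep t -> PiS v a < subs_moderated_profit v.
Proof.
  intros Ha. rewrite subs_moderated_profit_eq.
  assert (k_pos := s_sep_slack). pose proof profit_sep_gap as gap.
  set (b := alpha_sep t) in *. set (s0 := s_sep t) in *.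
  set (K := b ^ 2 + 1 - 2 * v) in *. set (k := 2 * s0 - 1 - b) in *.
  set (D := -3 * s0 ^ 2 + 2 * (1 + b) * s0 + K) in *.
  apply Rle_lt_trans with (((s0 ^ 2 - K) * (1 + b - s0) + D ^ 2 / (4 * k)) / 2).
  - apply PiS_le. intros p Hp.
    apply Rle_trans with (profitS b v p); [apply profitS_le_of_le; lra |].
    unfold profitS.
    assert (E := sqrt_sqrt (b ^ 2 + 1 - 2 * (v - p)) ltac:(pose proof v_pos; nra)).
    pose proof (sqrt_pos (b ^ 2 + 1 - 2 * (v - p))) as N.
    set (s := sqrt (b ^ 2 + 1 - 2 * (v - p))) in *.
    replace p with ((s ^ 2 - K) / 2) at 1 by (unfold K; nra).
    pose proof (profit_cubic_tangent_bound b K s s0 N k_pos) as tangent.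
    fold k D in tangent.
    assert (D ^ 2 / (4 * k) * (4 * k) = D ^ 2) by (field; lra).
    nra.
  - assert (D ^ 2 / (4 * k) * (4 * k) = D ^ 2) by (field; lra).
    assert (D ^ 2 / (4 * k) < 2 * t ^ 6 - (s0 ^ 2 - K) * (1 + b - s0)) by nra.
    lra.
Qed.

(* At [a = t^2 = yS v] the price making [sqrt (a^2 + 1 - 2 (v - p)) = 1 + t^2 / 3] already
   earns the moderation profit. *)
Lemma subs_moderated_profit_le_PiS : subs_moderated_profit v <= PiS v (t ^ 2).
Proof.
  rewrite subs_moderated_profit_eq.
  set (s1 := 1 + t ^ 2 / 3).
  set (p0 := (s1 ^ 2 - ((t ^ 2) ^ 2 + 1 - 2 * v)) / 2).
  assert (t2_le : t ^ 2 <= 3 / 4) by (pose proof one_minus_3t4_pos; nra).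
  assert (t2_nonneg : 0 <= t ^ 2) by (apply pow_le; lra).
  assert (p0_nonneg : 0 <= p0) by (unfold p0, s1; rewrite v_def; nra).
  apply Rle_trans with (profitS (t ^ 2) v p0); [| apply profitS_le_PiS; lra].
  unfold profitS.
  replace ((t ^ 2) ^ 2 + 1 - 2 * (v - p0)) with (s1 ^ 2) by (unfold p0; field).
  rewrite sqrt_pow2 by (unfold s1; lra).
  unfold p0, s1. rewrite v_def. nra.
Qed.

Lemma alphaS_sep_bounds : alpha_sep t <= alphaS v <= t ^ 2.
Proof.
  apply alphaS_between; [apply pow_le; lra | apply subs_moderated_profit_le_PiS |].
  intros a Ha Hprofit.
  destruct (Rle_or_lt (alpha_sep t) a) as [H | H]; [exact H |].
  pose proof (PiS_lt_below_sep a ltac:(lra)). lra.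
Qed.

Lemma t2_lt_alphaA : t ^ 2 < alphaA v.
Proof.
  unfold alphaA. apply Rsqr_incrst_0; [| apply pow_le; lra | apply sqrt_pos].
  rewrite Rsqr_sqrt by (pose proof v_pos; lra). unfold Rsqr.
  rewrite v_def. assert (0 < t ^ 4) by (apply pow_lt; lra). nra.
Qed.

End Separator.

Lemma quartic_param (v : R) : 0 < v -> exists t, 0 < t /\ v = 3 / 2 * t ^ 4.
Proof.
  intros Hv. exists (sqrt (sqrt (2 * v / 3))).
  assert (H1 : 0 < sqrt (2 * v / 3)) by (apply sqrt_lt_R0; lra).
  split; [apply sqrt_lt_R0; lra |].
  replace (sqrt (sqrt (2 * v / 3)) ^ 4)
    with (sqrt (sqrt (2 * v / 3)) * sqrt (sqrt (2 * v / 3))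
          * (sqrt (sqrt (2 * v / 3)) * sqrt (sqrt (2 * v / 3)))) by ring.
  rewrite sqrt_sqrt, sqrt_sqrt; lra.
Qed.

Theorem proposition7 (v : R) (hv : 0 < v < 1 / 2) :
  exists alphaP : R,
    (forall alpha, 0 <= alpha <= 1 -> alpha < alphaP ->
        planner_optimal alpha v (yP alpha v)) /\
    (forall alpha, 0 <= alpha <= 1 -> alphaP < alpha ->
        planner_optimal alpha v 1) /\
    alphaP < alphaS v /\ alphaS v < alphaA v /\
    (forall alpha, 0 <= alpha <= 1 -> alpha < alphaP ->
        yS v < yP alpha v /\ yP alpha v < yA v).
Proof.
  destruct hv as [v_pos v_lt].
  destruct (quartic_param v v_pos) as [t [t_pos v_def]].
  assert (v_lt_half : 2 * v < 1) by lra.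
  destruct (threshold_of_nonincreasing (fun a => moderation_gain a v) (alpha_sep t) (1 / 2))
    as [alphaP [alphaP_lt [gain_nonneg gain_neg]]].
  - eapply alpha_sep_pos; eassumption.
  - lra.
  - intros a1 a2 Ha. apply moderation_gain_nonincreasing; assumption.
  - intros a1 a2 Ha. pose proof (moderation_gain_lipschitz a1 a2 v Ha v_pos v_lt_half). lra.
  - eapply moderation_gain_sep_neg; eassumption.
  - assert (alphaS_bounds : alpha_sep t <= alphaS v <= t ^ 2)
      by (eapply alphaS_sep_bounds; eassumption).
    assert (t2_lt : t ^ 2 < alphaA v) by (eapply t2_lt_alphaA; eassumption).
    assert (yP_lt : forall a, 0 <= a < alphaP -> yP a v < sqrt (2 * v))
      by (intros a Ha; eapply yP_lt_sqrt2v_below_sep; eauto; lra).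
    exists alphaP. split; [| split; [| split; [| split]]].
    + intros a Ha Hlt. apply planner_optimal_yP; try lra; [apply yP_lt | apply gain_nonneg]; lra.
    + intros a Ha Hlt. apply planner_optimal_one; try lra. apply Rlt_le, gain_neg; lra.
    + lra.
    + lra.
    + intros a Ha Hlt. split; [apply yS_lt_yP | apply yP_lt]; lra.
Qed.
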